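(* Suppose that $v_k\to\bar v\in\mathcal V$ as $k\to\infty$. Then $v_{k,\mu}\to\bar v$ as $k\to\infty$ for every $\mu\in\{0,\dots,L\}$.
   Context: Let $\mathcal V=\bigotimes_{\nu=1}^d\mathbb R^{m_\nu}\cong\mathbb R^N$ with the Euclidean inner product. Let $A\in\mathbb R^{N\times N}$ be symmetric positive definite, $b\in\mathcal V\setminus\{0\}$, $f(v)=\frac{1}{\|b\|^2}(\frac12\langle Av,v\rangle-\langle b,v\rangle)$. Let $L\ge d$, $P_1,\dots,P_L$ finite-dimensional real inner product spaces, $P=P_1\times\dots\times P_L$, $U:P\to\mathcal V$ multilinear. For $\mathbf p\in P$, $W_{\mu,\mathbf p^{[\mu]}}:P_\mu\to\mathcal V$ is $q\mapsto U(p_1,\dots,p_{\mu-1},q,p_{\mu+1},\dots,p_L)$; $X^T$ transpose, $X^+$ pseudoinverse. ALS: choose $\mathbf p_1=(p_1^1,\dots,p_L^1)\in P$; for $k=1,2,\dots$ and $\mu=1,\dots,L$ in order, $W_{k,\mu}:=W_{\mu,(p_1^{k+1},\dots,p_{\mu-1}^{k+1},p_{\mu+1}^k,\dots,p_L^k)}$ and $p_\mu^{k+1}:=(W_{k,\mu}^TAW_{k,\mu})^+W_{k,\mu}^Tb$. Put $v_k=U(p_1^k,\dots,p_L^k)$ and, for $\mu\in\{0,\dots,L\}$, $v_{k,\mu}=U(p_1^{k+1},\dots,p_\mu^{k+1},p_{\mu+1}^k,\dots,p_L^k)$. *)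

From HB Require Import structures.
From mathcomp Require Import all_boot all_order all_algebra.
From mathcomp Require Import all_classical all_reals all_analysis.
Set Implicit Arguments. Unset Strict Implicit. Unset Printing Implicit Defensive.
Import Order.TTheory GRing.Theory Num.Theory.
Import numFieldTopology.Exports numFieldNormedType.Exports.
Local Open Scope ring_scope.

Section ALS.
Variable R : realType.

(* Moore-Penrose pseudoinverse, defined by the four Penrose conditions
   (it exists and is unique; xget picks it). *)
Definition penrose (k : nat) (M X : 'M[R]_k) : Prop :=
  [/\ M *m X *m M = M, X *m M *m X = X,
      (M *m X)^T = M *m X & (X *m M)^T = X *m M].

Definition pinv (k : nat) (M : 'M[R]_k) : 'M[R]_k :=
  xget 0 [set X | penrose M X]%classic.

Variables (L N : nat) (n : 'I_L -> nat).
Definition alspoint := forall mu : 'I_L, 'cV[R]_(n mu).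

Definition upd (p : alspoint) (mu : 'I_L) (q : 'cV[R]_(n mu)) : alspoint :=
  @dfwith _ (fun i => 'cV[R]_(n i)) p mu q.

Definition multilinear (U : alspoint -> 'cV[R]_N) : Prop :=
  forall (p : alspoint) (mu : 'I_L) (a : R) (q1 q2 : 'cV[R]_(n mu)),
    U (upd p (a *: q1 + q2)) = a *: U (upd p q1) + U (upd p q2).

(* matrix of W_{mu, p^[mu]} : q |-> U(p_1,..,q,..,p_L) in the standard bases *)
Definition Wmx (U : alspoint -> 'cV[R]_N) (p : alspoint) (mu : 'I_L)
  : 'M[R]_(N, n mu) :=
  \matrix_(i, j) U (upd p (delta_mx j 0 : 'cV[R]_(n mu))) i 0.

Definition als_update (U : alspoint -> 'cV[R]_N) (A : 'M[R]_N) (b : 'cV[R]_N)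
  (p : alspoint) (mu : 'I_L) : alspoint :=
  let W := Wmx U p mu in upd p (pinv (W^T *m A *m W) *m W^T *m b).

Definition als_partial U A b (p : alspoint) (m : nat) : alspoint :=
  foldl (als_update U A b) p (take m (enum 'I_L)).

Definition als_sweep U A b (p : alspoint) : alspoint := als_partial U A b p L.

(* iterate (index shifted: als_iter .. k = paper's p_{k+1}) *)
Definition als_iter U A b (p1 : alspoint) (k : nat) : alspoint :=
  iter k (als_sweep U A b) p1.

End ALS.

(* Each ALS micro-step replaces one component by an exact minimiser of the
   quadratic objective f(v) = <Av,v>/2 - <b,v> over the range of the linear map
   W_{k,mu}, and that range contains the current iterate. So f decreases along
   a micro-step by exactly |v_{k,mu-1} - v_{k,mu}|_A^2 / 2, which is at most the
   decrease f(v_k) - f(v_{k+1}) over the whole sweep; the latter tends to 0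
   because f is continuous and v_k converges. As A is positive definite,
   v_{k,mu-1} - v_{k,mu} -> 0, and v_{k,mu} -> vbar follows by induction on mu. *)

From HB Require Import structures.
From mathcomp Require Import all_boot all_order all_algebra.
From mathcomp Require Import all_classical all_reals all_analysis.
From mathcomp Require Import lra.
Import Order.TTheory GRing.Theory Num.Theory.
Import numFieldTopology.Exports numFieldNormedType.Exports.
Set Implicit Arguments. Unset Strict Implicit. Unset Printing Implicit Defensive.
Local Open Scope ring_scope.
Local Open Scope classical_set_scope.

Section matrix_limits.
Context {R : realType} {T : Type} (F : set_system T) {FF : Filter F}.

Lemma cvg_mxP m n (u : T -> 'M[R]_(m, n)) (l : 'M[R]_(m, n)) :
  u @ F --> l <-> forall i j, (fun t => u t i j) @ F --> l i j.
Proof.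
split=> [ul i j|ul]; first exact: cvg_comp ul (@coord_continuous R m n i j l).
apply/cvgrPdist_lt => e e0.
have : \forall t \near F, forall ij : 'I_m * 'I_n, `|l ij.1 ij.2 - u t ij.1 ij.2| < e.
  by apply: filter_forall => -[i j]; move/cvgrPdist_lt: (ul i j) => /(_ e e0).
apply: filterS => t ult.
rewrite [ltLHS]/Num.Def.normr/= mx_normrE.
by apply: bigmax_lt => // ij _; rewrite !mxE; exact: ult.
Qed.

Lemma cvg_mx_entry m n (u : T -> 'M[R]_(m, n)) (l : 'M[R]_(m, n)) i j :
  u @ F --> l -> (fun t => u t i j) @ F --> l i j.
Proof. by move/cvg_mxP. Qed.

Lemma cvg_mulmx m n p (u : T -> 'M[R]_(m, n)) (w : T -> 'M[R]_(n, p))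
    (l : 'M[R]_(m, n)) (l' : 'M[R]_(n, p)) :
  u @ F --> l -> w @ F --> l' -> (fun t => u t *m w t) @ F --> l *m l'.
Proof.
move=> /cvg_mxP ul /cvg_mxP wl'; apply/cvg_mxP => i j.
under eq_fun do rewrite mxE.
rewrite mxE; apply: (@cvg_big _ _ _ _ _ (@add_continuous R^o)) => // k _.
exact: cvgM.
Qed.

Lemma cvg_trmx m n (u : T -> 'M[R]_(m, n)) (l : 'M[R]_(m, n)) :
  u @ F --> l -> (fun t => (u t)^T) @ F --> l^T.
Proof.
move=> /cvg_mxP ul; apply/cvg_mxP => i j.
by under eq_fun do rewrite mxE; rewrite mxE; exact: ul.
Qed.

End matrix_limits.

Lemma mulmx_trmx_eq0 (R : realDomainType) m n (M : 'M[R]_(m, n)) :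
  M *m M^T = 0 -> M = 0.
Proof.
move=> /matrixP MMt; apply/matrixP => i j; rewrite mxE.
have := MMt i i; rewrite !mxE => /eqP.
rewrite psumr_eq0 => [/allP/(_ j)|k _]; last by rewrite mxE -expr2 sqr_ge0.
by rewrite mem_index_enum mxE -expr2 sqrf_eq0 => /(_ isT) /eqP.
Qed.

Lemma row_free_gram_unitmx (R : realFieldType) m n (B : 'M[R]_(m, n)) :
  row_free B -> B *m B^T \in unitmx.
Proof.
move=> freeB; rewrite unitmxE unitfE; apply/negP => /det0P [v v_neq0 vG].
have /mulmx_trmx_eq0/eqP : (v *m B) *m (v *m B)^T = 0.
  by rewrite trmx_mul mulmxA -(mulmxA v) vG mul0mx.
by rewrite mulmx_free_eq0 // (negPf v_neq0).
Qed.

Lemma row_free_right_inverse (R : realFieldType) m n (B : 'M[R]_(m, n)) :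
  row_free B -> exists2 C, B *m C = 1%:M & (C *m B)^T = C *m B.
Proof.
move=> /row_free_gram_unitmx Gu; exists (B^T *m invmx (B *m B^T)).
  by rewrite mulmxA mulmxV.
by rewrite !trmx_mul trmx_inv trmx_mul !trmxK !mulmxA.
Qed.

Lemma penrose_factor (R : realType) k r (M : 'M[R]_k) (B : 'M[R]_(r, k))
    (C : 'M[R]_(k, r)) (S : 'M[R]_r) :
  M = B^T *m S *m B -> B *m C = 1%:M -> (C *m B)^T = C *m B -> S \in unitmx ->
  penrose M (C *m invmx S *m C^T).
Proof.
move=> defM BC CBsym Su.
have BtC : C^T *m B^T = 1%:M by rewrite -trmx_mul BC trmx1.
have MX : M *m (C *m invmx S *m C^T) = B^T *m C^T.
  by rewrite defM -!mulmxA (mulmxA B) BC mul1mx (mulmxA S) mulmxV // mul1mx.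
have XM : (C *m invmx S *m C^T) *m M = C *m B.
  rewrite defM !mulmxA -(mulmxA _ C^T) BtC mulmx1.
  by rewrite -(mulmxA _ _ S) mulVmx // mulmx1.
split.
- by rewrite MX defM !mulmxA -(mulmxA _ C^T) BtC mulmx1.
- by rewrite XM !mulmxA -(mulmxA _ B) BC mulmx1.
- by rewrite MX -trmx_mul trmxK CBsym.
- by rewrite XM.
Qed.

(* [pinv] is defined by choice, so it satisfies the Penrose conditions only
   where a solution is known to exist. *)
Lemma sym_penrose_exists (R : realType) k (M : 'M[R]_k) :
  M^T = M -> exists X, penrose M X.
Proof.
move=> Msym.
set B := row_base M.
have [C BC CBsym] := row_free_right_inverse (row_base_free M).
set K := M *m pinvmx B.
have defM : M = K *m B by rewrite /K mulmxKpV // eq_row_base.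
set S := K^T *m C.
have BtS : B^T *m S = K.
  rewrite /S mulmxA -trmx_mul -defM Msym.
  have -> : M *m C = K *m B *m C by rewrite -defM.
  by rewrite -mulmxA BC mulmx1.
have defM' : M = B^T *m S *m B by rewrite BtS.
have Su : S \in unitmx.
  rewrite -row_free_unit /row_free eqn_leq rank_leq_row /=.
  have := mxrankM_maxl (B^T *m S) B; rewrite -defM' => rkM.
  exact: leq_trans rkM (mxrankM_maxr _ _).
by exists (C *m invmx S *m C^T); exact: penrose_factor defM' BC CBsym Su.
Qed.

Lemma penrose_pinv (R : realType) k (M : 'M[R]_k) : M^T = M -> penrose M (pinv M).
Proof.
move=> /sym_penrose_exists ex_X.
exact: (@xgetPex _ 0 [set X | penrose M X]).
Qed.

Definition bform (R : realFieldType) N (A : 'M[R]_N) (x y : 'cV[R]_N) : R :=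
  (x^T *m A *m y) 0 0.

Definition qform (R : realFieldType) N (A : 'M[R]_N) (x : 'cV[R]_N) : R :=
  bform A x x.

Definition posdef (R : realFieldType) N (A : 'M[R]_N) : Prop :=
  forall x : 'cV[R]_N, x != 0 -> 0 < qform A x.

(* The objective [f] of the paper without the positive factor [1 / |b|^2]. *)
Definition objective (R : realFieldType) N (A : 'M[R]_N) (b x : 'cV[R]_N) : R :=
  qform A x / 2 - (b^T *m x) 0 0.

Section quadratic_form.
Variables (R : realFieldType) (N : nat) (A : 'M[R]_N).
Hypothesis symA : A^T = A.
Hypothesis posA : posdef A.

Lemma bform_sym x y : bform A x y = bform A y x.
Proof.
have tr : (x^T *m A *m y)^T = y^T *m A *m x by rewrite !trmx_mul trmxK symA mulmxA.
by rewrite /bform -tr [RHS]mxE.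
Qed.

Lemma bformBl x y z : bform A (x - y) z = bform A x z - bform A y z.
Proof.
rewrite /bform linearB /= !mulmxBl.
by move: (x^T *m A *m z) (y^T *m A *m z) => X Y; rewrite !mxE.
Qed.

Lemma bformBr x y z : bform A x (y - z) = bform A x y - bform A x z.
Proof.
rewrite /bform mulmxBr.
by move: (x^T *m A *m y) (x^T *m A *m z) => Y Z; rewrite !mxE.
Qed.

Lemma bformZr a x y : bform A x (a *: y) = a * bform A x y.
Proof.
rewrite /bform -scalemxAr.
by move: (x^T *m A *m y) => Y; rewrite mxE.
Qed.

Lemma qformZ a x : qform A (a *: x) = a ^+ 2 * qform A x.
Proof. by rewrite /qform bformZr bform_sym bformZr mulrA -expr2. Qed.

Lemma qformB x y : qform A (x - y) = qform A x - 2 * bform A x y + qform A y.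
Proof. rewrite /qform bformBl !bformBr (bform_sym y x); lra. Qed.

Lemma qform_ge0 x : 0 <= qform A x.
Proof.
have [->|x_neq0] := eqVneq x 0; last exact/ltW/posA.
by rewrite /qform /bform mulmx0 mxE.
Qed.

Lemma posdef_mx_eq0 k (Y : 'M[R]_(N, k)) : Y^T *m A *m Y = 0 -> Y = 0.
Proof.
move=> YAY0; apply/matrixP => i j.
suff /matrixP/(_ i 0) : col j Y = 0 by rewrite !mxE.
apply/eqP; apply: contraT => /posA; rewrite /qform /bform.
by rewrite tr_col -row_mul (colE j Y) mulmxA -row_mul -colE YAY0 !mxE ltxx.
Qed.

Lemma posdef_unitmx : A \in unitmx.
Proof.
rewrite unitmxE unitfE; apply/negP => /det0P [v v_neq0 vA].
have /posA : v^T != 0 by rewrite trmx_eq0.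
by rewrite /qform /bform trmxK vA mul0mx mxE ltxx.
Qed.

(* Cauchy-Schwarz: expand [0 <= qform A (x - t *: y)] at [t = bform A x y / qform A y]. *)
Lemma bform_sqr_le x y : bform A x y ^+ 2 <= qform A x * qform A y.
Proof.
have [->|y_neq0] := eqVneq y 0.
  by rewrite /qform /bform !mulmx0 !mxE mulr0 expr2 mulr0.
have qy_gt0 := posA y_neq0.
set t := bform A x y / qform A y.
have tqy : t * qform A y = bform A x y by rewrite /t mulfVK // gt_eqF.
have := qform_ge0 (x - t *: y); rewrite qformB qformZ bformZr; nra.
Qed.

Lemma sqr_coord_le_qform (x : 'cV[R]_N) (i : 'I_N) :
  x i 0 ^+ 2 <= qform A x * qform A (invmx A *m delta_mx i 0).
Proof.
have <- : bform A x (invmx A *m delta_mx i 0) = x i 0.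
  by rewrite /bform -mulmxA (mulmxA A) mulmxV ?posdef_unitmx // mul1mx -colE !mxE.
exact: bform_sqr_le.
Qed.

Lemma objective_sub_normal_eq k (W : 'M[R]_(N, k)) b z q :
  (W^T *m A *m W) *m z = W^T *m b ->
  objective A b (W *m q) - objective A b (W *m z) = qform A (W *m q - W *m z) / 2.
Proof.
move=> normal_z.
have bform_Wz y : bform A (W *m z) (W *m y) = (b^T *m (W *m y)) 0 0.
  rewrite /bform.
  have -> : (W *m z)^T *m A *m (W *m y) = ((W^T *m A *m W) *m z)^T *m y.
    by rewrite !trmx_mul !trmxK symA !mulmxA.
  by rewrite normal_z trmx_mul trmxK mulmxA.
have := bform_Wz q; have := bform_Wz z.
rewrite /objective qformB bform_sym /qform; lra.
Qed.

End quadratic_form.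

Lemma pinv_normal_eq (R : realType) N k (A : 'M[R]_N) (W : 'M[R]_(N, k))
    (b : 'cV[R]_N) :
  A^T = A -> posdef A ->
  (W^T *m A *m W) *m (pinv (W^T *m A *m W) *m W^T *m b) = W^T *m b.
Proof.
move=> symA posA; set M := W^T *m A *m W.
have symM : M^T = M by rewrite /M !trmx_mul trmxK symA mulmxA.
have [MXM _ MXsym _] := penrose_pinv symM.
set E := 1%:M - M *m pinv M.
have EM0 : E *m M = 0 by rewrite /E mulmxBl mul1mx MXM subrr.
have WE0 : W *m E = 0.
  apply: (posdef_mx_eq0 posA).
  rewrite trmx_mul /E linearB /= trmx1 MXsym -/E.
  by rewrite -!mulmxA (mulmxA W^T) (mulmxA (W^T *m A)) -/M mulmxA EM0 mul0mx.
have WMX : W = W *m (M *m pinv M).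
  by apply/eqP; rewrite -subr_eq0 -[W in W - _]mulmx1 -mulmxBr -/E WE0.
have WtMX : W^T = M *m pinv M *m W^T by rewrite {1}WMX trmx_mul MXsym.
by rewrite !mulmxA -WtMX.
Qed.

Section qform_limits.
Context {R : realType} {N : nat} (A : 'M[R]_N).
Context {T : Type} (F : set_system T) {FF : Filter F}.

Lemma cvg_objective (b : 'cV[R]_N) (u : T -> 'cV[R]_N) (l : 'cV[R]_N) :
  u @ F --> l -> (fun t => objective A b (u t)) @ F --> objective A b l.
Proof.
move=> ul; apply: cvgB; last by apply: cvg_mx_entry; exact: cvg_mulmx (cvg_cst _) ul.
apply: cvgM (cvg_cst _); apply: cvg_mx_entry.
exact: cvg_mulmx (cvg_mulmx (cvg_trmx ul) (cvg_cst _)) ul.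
Qed.

Lemma cvg_sqr0 (a : T -> R) : (fun t => a t ^+ 2) @ F --> 0 -> a @ F --> 0.
Proof.
move=> /cvgr0Pnorm_lt sqr_a; apply/cvgr0Pnorm_lt => e e_gt0.
apply: filterS (sqr_a _ (exprn_gt0 2 e_gt0)) => t.
by rewrite normrX; have := normr_ge0 (a t); nra.
Qed.

Lemma qform_cvg0 (d : T -> 'cV[R]_N) : A^T = A -> posdef A ->
  (fun t => qform A (d t)) @ F --> 0 -> d @ F --> (0 : 'cV[R]_N).
Proof.
move=> symA posA qd0; apply/cvg_mxP => i j; rewrite (ord1 j) mxE; apply: cvg_sqr0.
set c := qform A (invmx A *m delta_mx i 0).
apply: (squeeze_cvgr (f := fun=> 0) (h := fun t => qform A (d t) * c)).
- by apply: nearW => t; rewrite sqr_ge0 /=; exact: sqr_coord_le_qform.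
- exact: cvg_cst.
- by rewrite -(mul0r c); apply: cvgM qd0 (cvg_cst _).
Qed.

End qform_limits.

Lemma upd_id (R : realType) L (n : 'I_L -> nat) (p : alspoint R n) mu :
  upd p (p mu) = p.
Proof.
apply: functional_extensionality_dep => i; rewrite /upd.
by case: (eqVneq mu i) => [->|mu_neq_i]; [apply: dfwith_in | apply: dfwith_out].
Qed.

Section als.
Variables (R : realType) (L N : nat) (n : 'I_L -> nat).
Variables (U : alspoint R n -> 'cV[R]_N) (A : 'M[R]_N) (b : 'cV[R]_N).
Hypothesis U_multilinear : multilinear U.
Hypothesis symA : A^T = A.
Hypothesis posA : posdef A.

Local Notation f := (objective A b).
Local Notation partial := (als_partial U A b).

Lemma multilinear_Wmx (p : alspoint R n) mu (q : 'cV[R]_(n mu)) :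
  U (upd p q) = Wmx U p mu *m q.
Proof.
have U_sum (r : seq 'I_(n mu)) (c : 'I_(n mu) -> R) :
    U (upd p (\sum_(j <- r) c j *: (delta_mx j 0 : 'cV_(n mu)))) =
    \sum_(j <- r) c j *: U (upd p (delta_mx j 0 : 'cV_(n mu))).
  elim: r => [|j r IH]; last by rewrite !big_cons U_multilinear IH.
  rewrite !big_nil; have := U_multilinear p 1 (0 : 'cV[R]_(n mu)) 0.
  rewrite scaler0 addr0 scale1r => U0.
  by apply: (addrI (U (upd p 0))); rewrite addr0; exact: esym U0.
have defq : q = \sum_(j < n mu) q j 0 *: (delta_mx j 0 : 'cV_(n mu)).
  by rewrite {1}(matrix_sum_delta q); apply: eq_bigr => j _; rewrite big_ord1.
rewrite [in LHS]defq U_sum; apply/matrixP => i k; rewrite (ord1 k) summxE !mxE.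
by apply: eq_bigr => j _; rewrite !mxE mulrC.
Qed.

Lemma objective_als_update p mu :
  f (U p) - f (U (als_update U A b p mu)) =
  qform A (U p - U (als_update U A b p mu)) / 2.
Proof.
have Up : U p = Wmx U p mu *m p mu by rewrite -{1}(upd_id p mu) multilinear_Wmx.
rewrite /als_update /= multilinear_Wmx Up; apply: objective_sub_normal_eq => //.
exact: pinv_normal_eq.
Qed.

Lemma als_partial0 p : partial p 0 = p.
Proof. by rewrite /als_partial take0. Qed.

Lemma als_partialS p m (m_lt_L : (m < L)%N) :
  partial p m.+1 = als_update U A b (partial p m) (Ordinal m_lt_L).
Proof.
rewrite /als_partial (take_nth (Ordinal m_lt_L)) ?size_enum_ord //.
rewrite -cats1 foldl_cat /=; congr als_update.
by apply: val_inj; rewrite /= nth_enum_ord.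
Qed.

Lemma objective_als_partial_le p i j :
  (i <= j <= L)%N -> f (U (partial p j)) <= f (U (partial p i)).
Proof.
elim: j => [|j IH]; first by rewrite leqn0 => /andP[/eqP ->].
case/andP; rewrite leq_eqVlt => /orP[/eqP -> //|i_lt_Sj j_lt_L].
apply: le_trans (IH _); last by rewrite -ltnS i_lt_Sj ltnW.
have := objective_als_update (partial p j) (Ordinal j_lt_L).
rewrite -als_partialS; have := qform_ge0 posA (U (partial p j) - U (partial p j.+1)).
lra.
Qed.

Lemma qform_als_step_le p m (m_lt_L : (m < L)%N) :
  qform A (U (partial p m) - U (partial p m.+1)) / 2 <=
  f (U p) - f (U (als_sweep U A b p)).
Proof.
have step := objective_als_update (partial p m) (Ordinal m_lt_L).
rewrite -als_partialS in step.
have le_m : f (U (partial p m)) <= f (U p).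
  rewrite -[X in _ <= f (U X)](als_partial0 p).
  by apply: objective_als_partial_le; exact: ltnW.
have le_L : f (U (als_sweep U A b p)) <= f (U (partial p m.+1)).
  by apply: objective_als_partial_le; rewrite m_lt_L leqnn.
lra.
Qed.

Lemma cvg_als_partial p1 (vbar : 'cV[R]_N) :
  (fun k => U (als_iter U A b p1 k)) @ \oo --> vbar ->
  forall m, (m <= L)%N ->
  (fun k => U (partial (als_iter U A b p1 k) m)) @ \oo --> vbar.
Proof.
set p := als_iter U A b p1 => Up_vbar.
have p_sweep k : als_sweep U A b (p k) = p k.+1 by rewrite /p /als_iter iterS.
have gap0 : (fun k => f (U (p k)) - f (U (p k.+1))) @ \oo --> 0.
  rewrite -(subrr (f vbar)); apply: cvgB; first exact: cvg_objective.
  by rewrite (cvg_shiftS (fun k => f (U (p k)))); exact: cvg_objective.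
elim=> [_|m IH m_lt_L]; first by under eq_fun do rewrite als_partial0.
have step0 :
    (fun k => U (partial (p k) m) - U (partial (p k) m.+1)) @ \oo --> (0 : 'cV[R]_N).
  apply: (qform_cvg0 symA posA).
  apply: (@squeeze_cvgr _ _ _ _ (fun=> 0)
           (fun k => 2 * (f (U (p k)) - f (U (p k.+1))))).
  - apply: nearW => k; rewrite qform_ge0 //=.
    have := qform_als_step_le (p k) m_lt_L; rewrite p_sweep; lra.
  - exact: cvg_cst.
  - by rewrite -(mulr0 2); apply: cvgM gap0; exact: cvg_cst.
have -> : (fun k => U (partial (p k) m.+1)) =
    (fun k => U (partial (p k) m) - (U (partial (p k) m) - U (partial (p k) m.+1))).
  by apply: funext => k; rewrite subKr.
by rewrite -[vbar]subr0; apply: cvgB step0; exact: IH (ltnW m_lt_L).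
Qed.

End als.

Unset Implicit Arguments.

Theorem mainTheorem13 (R : realType) (d : nat) (m : 'I_d -> nat) (L : nat)
  (n : 'I_L -> nat)
  (A : 'M[R]_(\prod_(nu < d) m nu)) (b : 'cV[R]_(\prod_(nu < d) m nu))
  (U : alspoint R n -> 'cV[R]_(\prod_(nu < d) m nu))
  (p1 : alspoint R n) (vbar : 'cV[R]_(\prod_(nu < d) m nu)) :
  (d <= L)%N ->
  A^T = A ->
  (forall x : 'cV[R]_(\prod_(nu < d) m nu), x != 0 -> 0 < (x^T *m A *m x) 0 0) ->
  b != 0 ->
  multilinear U ->
  (fun k => U (als_iter U A b p1 k)) @ \oo --> vbar ->
  forall mu : 'I_L.+1,
    (fun k => U (als_partial U A b (als_iter U A b p1 k) mu)) @ \oo --> vbar.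
Proof.
move=> _ symA posA _ U_multilinear Up_vbar mu.
exact (cvg_als_partial U_multilinear symA posA Up_vbar (ltn_ord mu)).
Qed.
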